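(* Assume the standing assumptions stated in the context. Let $\mathsf{u}=(\mathsf{u}_1,\mathsf{u}_2)$ be a bounded upper semicontinuous viscosity subsolution of the system $$\rho v_j(x)=H(x,y_j,Dv_j(x))+\lambda_j\big(v_{\bar\jmath}(x)-v_j(x)\big),\qquad j=1,2,\ \bar\jmath=3-j,$$ on $[\underline{x},+\infty)$. Let $\mathsf{v}=(\mathsf{v}_1,\mathsf{v}_2)$ be a bounded lower semicontinuous viscosity supersolution of the same system on $(\underline{x},+\infty)$. Extend $\mathsf{v}_j$ to $\underline{x}$ by $$\mathsf{v}_j(\underline{x})=\liminf_{z\to\underline{x},\,z>\underline{x}}\mathsf{v}_j(z).$$ Then $\mathsf{u}_j\le\mathsf{v}_j$ on $[\underline{x},+\infty)$ for $j=1,2$.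
   Context: Standing assumptions: $\rho>0$; $-\infty<r<\rho$; $0<y_1<y_2$; $\gamma>1$; $\underline{x}\le0$ with $\rho\underline{x}+y_j>0$ for $j=1,2$; $\lambda_1,\lambda_2\ge0$ are constants (Poisson switching intensities). The utility is $u(c)=\frac{c^{1-\gamma}}{1-\gamma}$ for $c>0$. The Hamiltonian is $$H(x,y_j,p)=\sup_{c\ge0}\{u(c)+(rx+y_j-c)p\}=\begin{cases}(rx+y_j)p+\frac{\gamma}{1-\gamma}p^{1-\frac1\gamma}, & p\ge0,\\ +\infty,& p<0.\end{cases}$$ All functions are defined on $[\underline{x},+\infty)$. Viscosity subsolution on a set $S\subseteq[\underline{x},\infty)$: an u.s.c. pair $v=(v_1,v_2)$ such that whenever $\varphi$ is smooth, $j\in\{1,2\}$, and $v_j-\varphi$ has a local maximum (relative to $[\underline{x},\infty)$) at $x_0\in S$, then $\rho v_j(x_0)\le H(x_0,y_j,D\varphi(x_0))+\lambda_j(v_{\bar\jmath}(x_0)-v_j(x_0))$. Viscosity supersolution on $S$: an l.s.c. pair such that whenever $v_j-\varphi$ has a local minimum at $x_0\in S$, then $\rho v_j(x_0)\ge H(x_0,y_j,D\varphi(x_0))+\lambda_j(v_{\bar\jmath}(x_0)-v_j(x_0))$. *)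

From Stdlib Require Import Reals.
From Coquelicot Require Import Coquelicot.
Open Scope R_scope.

(* p^a for p >= 0, with the convention 0^a = 0 (used only for a > 0). *)
Definition ppow (p a : R) : R := if Req_EM_T p 0 then 0 else Rpower p a.

Definition Ham (r gamma x y p : R) : Rbar :=
  if Rlt_dec p 0 then p_infty
  else Finite ((r * x + y) * p + gamma / (1 - gamma) * ppow p (1 - 1 / gamma)).

Definition smooth (phi : R -> R) : Prop := forall (n : nat) (x : R), ex_derive_n phi n x.

Definition usc_on (D : R -> Prop) (f : R -> R) : Prop :=
  forall x0, D x0 -> forall eps, 0 < eps -> exists delta, 0 < delta /\
    forall x, D x -> Rabs (x - x0) < delta -> f x < f x0 + eps.
Definition lsc_on (D : R -> Prop) (f : R -> R) : Prop :=
  forall x0, D x0 -> forall eps, 0 < eps -> exists delta, 0 < delta /\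
    forall x, D x -> Rabs (x - x0) < delta -> f x0 - eps < f x.

Definition loc_max_on (D : R -> Prop) (f : R -> R) (x0 : R) : Prop :=
  exists delta, 0 < delta /\ forall x, D x -> Rabs (x - x0) < delta -> f x <= f x0.
Definition loc_min_on (D : R -> Prop) (f : R -> R) (x0 : R) : Prop :=
  exists delta, 0 < delta /\ forall x, D x -> Rabs (x - x0) < delta -> f x0 <= f x.

Definition bounded_on (D : R -> Prop) (f : R -> R) : Prop :=
  exists M, forall x, D x -> Rabs (f x) <= M.

Definition sub_ineq (D S : R -> Prop) (rho r gamma yj lamj : R) (vj vjb : R -> R) : Prop :=
  forall (phi : R -> R) (x0 : R), smooth phi -> S x0 ->
    loc_max_on D (fun x => vj x - phi x) x0 ->
    Rbar_le (Finite (rho * vj x0))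
      (Rbar_plus (Ham r gamma x0 yj (Derive phi x0)) (Finite (lamj * (vjb x0 - vj x0)))).
Definition super_ineq (D S : R -> Prop) (rho r gamma yj lamj : R) (vj vjb : R -> R) : Prop :=
  forall (phi : R -> R) (x0 : R), smooth phi -> S x0 ->
    loc_min_on D (fun x => vj x - phi x) x0 ->
    Rbar_le (Rbar_plus (Ham r gamma x0 yj (Derive phi x0)) (Finite (lamj * (vjb x0 - vj x0))))
      (Finite (rho * vj x0)).

Definition visc_sub (D S : R -> Prop) (rho r gamma y1 y2 lam1 lam2 : R) (v1 v2 : R -> R) : Prop :=
  usc_on D v1 /\ usc_on D v2 /\
  sub_ineq D S rho r gamma y1 lam1 v1 v2 /\ sub_ineq D S rho r gamma y2 lam2 v2 v1.
Definition visc_super (D S : R -> Prop) (rho r gamma y1 y2 lam1 lam2 : R) (v1 v2 : R -> R) : Prop :=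
  lsc_on D v1 /\ lsc_on D v2 /\
  super_ineq D S rho r gamma y1 lam1 v1 v2 /\ super_ineq D S rho r gamma y2 lam2 v2 v1.

Definition is_liminf_right (f : R -> R) (a l : R) : Prop :=
  (forall eps, 0 < eps -> exists delta, 0 < delta /\
     forall z, a < z < a + delta -> l - eps < f z) /\
  (forall eps delta, 0 < eps -> 0 < delta -> exists z, a < z < a + delta /\ f z < l + eps).

From Stdlib Require Import Reals Lra Psatz Classical IndefiniteDescription FunctionalExtensionality.
From Coquelicot Require Import Coquelicot.
Open Scope R_scope.

(* Since [H = +oo] for negative slopes, supersolutions are nondecreasing.  If
   [u_b x - v_b x = th > 0], choose [x1 > xl] with [r x1 + y1 > 0] and maximise over [b] and
   [x, y >= xl] the doubled function
     [u_b x - v_b y - beta (x - xl) - alpha/2 (y - (1 - h) x - h x1)^2].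
   Pulling [y] towards [x1] keeps the maximiser inside [(xl, +oo)], where [v] is a
   supersolution, and costs at most [th/2] (monotonicity of [v], or the liminf defining
   [v_b xl]); maximising over [b] as well makes the coupling terms harmless.  At the maximum,
   the two test slopes are [q] and [(1 - h) q + beta]; the resulting concavity defect of
   [p^(1 - 1/gamma)] is of order [h], [r < rho] absorbs the penalty once [alpha] is large, and
   one gets [rho (u_b x - v_b (x + h (x1 - x))) <= C h], a contradiction for small [h]. *)

(** * Semicontinuity and maxima *)

Lemma usc_on_subset (D P : R -> Prop) (f : R -> R) :
  (forall x, P x -> D x) -> usc_on D f -> usc_on P f.
Proof.
  intros HPD Hf x0 Hx0 eps Heps.
  destruct (Hf x0 (HPD x0 Hx0) eps Heps) as [d [Hd Hfd]].
  exists d; split; auto.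
Qed.

Lemma lsc_on_subset (D P : R -> Prop) (f : R -> R) :
  (forall x, P x -> D x) -> lsc_on D f -> lsc_on P f.
Proof.
  intros HPD Hf x0 Hx0 eps Heps.
  destruct (Hf x0 (HPD x0 Hx0) eps Heps) as [d [Hd Hfd]].
  exists d; split; auto.
Qed.

Lemma usc_on_opp (P : R -> Prop) (f : R -> R) :
  lsc_on P f -> usc_on P (fun x => - f x).
Proof.
  intros Hf x0 Hx0 eps Heps.
  destruct (Hf x0 Hx0 eps Heps) as [d [Hd Hfd]].
  exists d; split; auto.
  intros x Hx Hxd; specialize (Hfd x Hx Hxd); lra.
Qed.

Lemma usc_on_plus (P : R -> Prop) (f g : R -> R) :
  usc_on P f -> usc_on P g -> usc_on P (fun x => f x + g x).
Proof.
  intros Hf Hg x0 Hx0 eps Heps.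
  destruct (Hf x0 Hx0 (eps / 2)) as [d1 [Hd1 Hf1]]; [lra|].
  destruct (Hg x0 Hx0 (eps / 2)) as [d2 [Hd2 Hg2]]; [lra|].
  exists (Rmin d1 d2); split; [now apply Rmin_glb_lt|].
  intros x Hx Hxd.
  specialize (Hf1 x Hx (Rlt_le_trans _ _ _ Hxd (Rmin_l _ _))).
  specialize (Hg2 x Hx (Rlt_le_trans _ _ _ Hxd (Rmin_r _ _))).
  lra.
Qed.

Lemma usc_on_continuous (P : R -> Prop) (g : R -> R) :
  (forall x, continuity_pt g x) -> usc_on P g.
Proof.
  intros Hg x0 _ eps Heps.
  destruct (Hg x0 eps Heps) as [d [Hd Hgd]].
  exists d; split; auto.
  intros x _ Hxd.
  destruct (Req_dec x x0) as [->|Hne]; [lra|].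
  specialize (Hgd x (conj (conj I (not_eq_sym Hne)) Hxd)).
  unfold dist in Hgd; simpl in Hgd; unfold R_dist in Hgd.
  apply Rabs_def2 in Hgd; lra.
Qed.

Lemma usc_on_lipschitz_above (P : R -> Prop) (g : R -> R) (L : R) :
  (forall x x', P x -> P x' -> g x' <= g x + L * Rabs (x' - x)) -> usc_on P g.
Proof.
  intros Hg x0 Hx0 eps Heps.
  exists (eps / (Rabs L + 1)); split; [apply Rdiv_lt_0_compat; pose proof (Rabs_pos L); lra|].
  intros x Hx Hxd.
  specialize (Hg x0 x Hx0 Hx).
  assert (Hsmall : (Rabs L + 1) * Rabs (x - x0) < eps).
  { pose proof (Rabs_pos L).
    apply Rmult_lt_compat_l with (r := Rabs L + 1) in Hxd; [|lra].
    replace ((Rabs L + 1) * (eps / (Rabs L + 1))) with eps in Hxd by (field; lra).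
    exact Hxd. }
  pose proof (Rle_abs L); pose proof (Rabs_pos (x - x0)); nra.
Qed.

Lemma ValAdh_near (u : nat -> R) (l : R) :
  ValAdh u l -> forall (N : nat) (d : R), 0 < d -> exists p, (N <= p)%nat /\ Rabs (u p - l) < d.
Proof.
  intros Hl N d Hd.
  apply (Hl (disc l (mkposreal d Hd)) N).
  exists (mkposreal d Hd); intros y Hy; exact Hy.
Qed.

Lemma usc_on_attains_max (f : R -> R) (a b : R) :
  a <= b -> usc_on (fun x => a <= x <= b) f ->
  (exists M, forall x, a <= x <= b -> f x <= M) ->
  exists c, a <= c <= b /\ forall x, a <= x <= b -> f x <= f c.
Proof.
  intros Hab Hf [M HM].
  destruct (completeness (fun z => exists x, a <= x <= b /\ z = f x)) as [s [Hsub Hslub]].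
  { exists M; intros z [x [Hx ->]]; auto. }
  { exists (f a), a; split; [lra|reflexivity]. }
  assert (Hnear : forall n : nat, exists x, a <= x <= b /\ s - / (INR n + 1) < f x).
  { intro n. pose proof (RinvN_pos n) as Hn. apply NNPP; intro Hno.
    assert (s <= s - / (INR n + 1)); [|lra].
    apply Hslub; intros z [x [Hx ->]].
    apply Rnot_lt_le; intro Hlt; apply Hno; exists x; auto. }
  destruct (functional_choice _ Hnear) as [xs Hxs].
  destruct (Bolzano_Weierstrass xs _ (compact_P3 a b) (fun n => proj1 (Hxs n))) as [c Hc].
  assert (Hcab : a <= c <= b).
  { split; apply Rnot_lt_le; intro Hout.
    - destruct (ValAdh_near xs c Hc 0 (a - c)) as [p [_ Hp]]; [lra|].
      pose proof (proj1 (Hxs p)); apply Rabs_def2 in Hp; lra.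
    - destruct (ValAdh_near xs c Hc 0 (c - b)) as [p [_ Hp]]; [lra|].
      pose proof (proj1 (Hxs p)); apply Rabs_def2 in Hp; lra. }
  exists c; split; auto.
  assert (Hsc : s <= f c).
  { apply Rle_plus_epsilon; intros eps Heps.
    destruct (Hf c Hcab (eps / 2)) as [d [Hd Hfd]]; [lra|].
    destruct (archimed_cor1 (eps / 2)) as [N [HN HN0]]; [lra|].
    destruct (ValAdh_near xs c Hc N d Hd) as [p [HNp Hp]].
    destruct (Hxs p) as [Hxp Hfp].
    specialize (Hfd (xs p) Hxp Hp).
    assert (/ (INR p + 1) <= / INR N).
    { apply Rinv_le_contravar; [apply lt_0_INR; lia|apply le_INR in HNp; lra]. }
    lra. }
  intros x Hx. apply Rle_trans with s; auto.
  apply Hsub; exists x; auto.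
Qed.

(* Maximise in [y] first; the Lipschitz dependence of [K] on [x] makes the partial maximum
   upper semicontinuous in [x]. *)
Lemma usc_on_box_attains_max (A : R -> R) (K : R -> R -> R) (a1 b1 a2 b2 L : R) :
  a1 <= b1 -> a2 <= b2 ->
  usc_on (fun x => a1 <= x <= b1) A -> (exists MA, forall x, a1 <= x <= b1 -> A x <= MA) ->
  (forall x, a1 <= x <= b1 -> usc_on (fun y => a2 <= y <= b2) (K x)) ->
  (exists MK, forall x y, a1 <= x <= b1 -> a2 <= y <= b2 -> K x y <= MK) ->
  (forall x x' y, a1 <= x <= b1 -> a1 <= x' <= b1 -> a2 <= y <= b2 ->
     K x' y <= K x y + L * Rabs (x' - x)) ->
  exists xh yh, a1 <= xh <= b1 /\ a2 <= yh <= b2 /\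
    forall x y, a1 <= x <= b1 -> a2 <= y <= b2 -> A x + K x y <= A xh + K xh yh.
Proof.
  intros Hab1 Hab2 HA [MA HMA] HK [MK HMK] HKlip.
  assert (Hslice : forall x, exists y, a1 <= x <= b1 ->
    a2 <= y <= b2 /\ forall y', a2 <= y' <= b2 -> K x y' <= K x y).
  { intro x. destruct (classic (a1 <= x <= b1)) as [Hx|Hx].
    - destruct (usc_on_attains_max (K x) a2 b2 Hab2 (HK x Hx)) as [y Hy];
        [exists MK; auto|].
      exists y; auto.
    - exists a2; tauto. }
  destruct (functional_choice _ Hslice) as [Y HY].
  assert (HG : usc_on (fun x => a1 <= x <= b1) (fun x => A x + K x (Y x))).
  { apply usc_on_plus; auto.
    apply (usc_on_lipschitz_above _ _ L); intros x x' Hx Hx'.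
    destruct (HY x) as [_ Hmax]; auto. destruct (HY x') as [HYx' _]; auto.
    specialize (HKlip x x' (Y x') Hx Hx' HYx'). specialize (Hmax (Y x') HYx'). lra. }
  destruct (usc_on_attains_max _ a1 b1 Hab1 HG) as [xh [Hxh Hmax]].
  { exists (MA + MK); intros x Hx.
    destruct (HY x Hx) as [HYx _]. specialize (HMA x Hx). specialize (HMK x (Y x) Hx HYx). lra. }
  exists xh, (Y xh). destruct (HY xh Hxh) as [HYxh _].
  repeat split; try tauto.
  intros x y Hx Hy. destruct (HY x Hx) as [_ Hslx].
  specialize (Hslx y Hy). specialize (Hmax x Hx). lra.
Qed.

Lemma bounded_on_liminf_right_ext (v : R -> R) (a : R) :
  is_liminf_right v a (v a) -> bounded_on (fun x => a < x) v -> bounded_on (fun x => a <= x) v.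
Proof.
  intros [Hbelow Habove] [M HM]. exists M. intros x [Hx|<-]; auto.
  apply Rabs_le; split; apply Rle_plus_epsilon; intros eps Heps.
  - destruct (Habove eps 1 Heps Rlt_0_1) as [z [Hz Hvz]].
    specialize (HM z (proj1 Hz)). apply Rabs_le_between in HM. lra.
  - destruct (Hbelow eps Heps) as [d [Hd Hvd]].
    specialize (Hvd (a + d / 2) ltac:(lra)). specialize (HM (a + d / 2) ltac:(lra)).
    apply Rabs_le_between in HM. lra.
Qed.

Lemma lsc_on_liminf_right_ext (v : R -> R) (a : R) :
  is_liminf_right v a (v a) -> lsc_on (fun x => a < x) v -> lsc_on (fun x => a <= x) v.
Proof.
  intros [Hbelow _] Hv x0 [Hx0|<-] eps Heps.
  - destruct (Hv x0 Hx0 eps Heps) as [d [Hd Hvd]].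
    exists (Rmin d (x0 - a)); split; [apply Rmin_glb_lt; lra|].
    intros x Hx Hxd. pose proof (Rmin_l d (x0 - a)); pose proof (Rmin_r d (x0 - a)).
    apply Hvd; [apply Rabs_def2 in Hxd|]; lra.
  - destruct (Hbelow eps Heps) as [d [Hd Hvd]].
    exists d; split; auto.
    intros x [Hx|<-] Hxd; [apply Hvd; apply Rabs_def2 in Hxd|]; lra.
Qed.

Lemma bounded_on_bool (D : R -> Prop) (f : bool -> R -> R) :
  (forall b, bounded_on D (f b)) -> exists M, forall b x, D x -> Rabs (f b x) <= M.
Proof.
  intro Hf. destruct (Hf true) as [M1 H1], (Hf false) as [M2 H2].
  exists (Rmax M1 M2); intros [|] x Hx; eapply Rle_trans;
    [apply H1; auto|apply Rmax_l|apply H2; auto|apply Rmax_r].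
Qed.

Lemma exists_pos_mul_le (A B : R) : 0 < B -> exists d, 0 < d /\ forall d', 0 <= d' <= d -> d' * A <= B.
Proof.
  intro HB. pose proof (Rabs_pos A).
  exists (B / (Rabs A + 1)); split; [apply Rdiv_lt_0_compat; lra|].
  intros d' Hd'.
  assert (d' * (Rabs A + 1) <= B).
  { apply Rle_trans with (B / (Rabs A + 1) * (Rabs A + 1)); [apply Rmult_le_compat_r; lra|].
    right; field; lra. }
  pose proof (Rle_abs A). nra.
Qed.

Lemma Rabs_le_of_between (t a b : R) : a <= t <= b -> Rabs t <= Rabs a + Rabs b.
Proof.
  intro Ht. apply Rabs_le_between.
  pose proof (Rle_abs a); pose proof (Rle_abs (- a)); pose proof (Rle_abs b); pose proof (Rle_abs (- b)).
  rewrite Rabs_Ropp in *. lra.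
Qed.

Lemma sq_affine_lipschitz (k c a1 b1 a2 b2 : R) : 0 <= k <= 1 ->
  exists L, forall x x' y, a1 <= x <= b1 -> a1 <= x' <= b1 -> a2 <= y <= b2 ->
    (y - k * x - c) ^ 2 <= (y - k * x' - c) ^ 2 + L * Rabs (x' - x).
Proof.
  intro Hk.
  set (B := Rabs a1 + Rabs b1 + Rabs a2 + Rabs b2 + Rabs c).
  exists (2 * B). intros x x' y Hx Hx' Hy.
  set (s := (y - k * x - c) + (y - k * x' - c)).
  assert (Hs : Rabs s <= 2 * B).
  { apply Rabs_le_of_between, Rabs_le_between in Hx, Hx', Hy.
    assert (Hk_contract : forall t, Rabs t <= Rabs a1 + Rabs b1 -> Rabs (k * t) <= Rabs a1 + Rabs b1).
    { intros t Ht. rewrite Rabs_mult, (Rabs_pos_eq k) by lra.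
      pose proof (Rabs_pos t). nra. }
    apply Rabs_le_between, Hk_contract, Rabs_le_between in Hx, Hx'.
    pose proof (Rle_abs c); pose proof (Rle_abs (- c)); rewrite Rabs_Ropp in *.
    unfold s, B. apply Rabs_le_between. lra. }
  replace ((y - k * x - c) ^ 2) with ((y - k * x' - c) ^ 2 + k * ((x' - x) * s)) by (unfold s; ring).
  apply Rplus_le_compat_l.
  assert (Hxs : (x' - x) * s <= Rabs (x' - x) * (2 * B)).
  { eapply Rle_trans; [apply Rle_abs|]. rewrite Rabs_mult.
    apply Rmult_le_compat_l; [apply Rabs_pos|exact Hs]. }
  assert (0 <= Rabs (x' - x) * (2 * B)) by (apply Rmult_le_pos; [apply Rabs_pos|pose proof (Rabs_pos s); lra]).
  destruct (Rle_or_lt 0 ((x' - x) * s)); nra.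
Qed.

Lemma small_penalty_close (E alpha e w : R) :
  0 < w -> 0 < alpha -> 2 * E / w ^ 2 < alpha -> alpha * (e ^ 2 / 2) <= E -> Rabs e < w.
Proof.
  intros Hw Ha Halpha Hpen.
  rewrite <- (Rabs_pos_eq w) by lra. apply Rsqr_lt_abs_0. unfold Rsqr.
  assert (Hw2 : 0 < w ^ 2) by (apply pow_lt; lra).
  assert (2 * E < alpha * w ^ 2).
  { apply Rmult_lt_compat_r with (r := w ^ 2) in Halpha; [|lra].
    replace (2 * E / w ^ 2 * w ^ 2) with (2 * E) in Halpha by (field; lra). exact Halpha. }
  apply Rnot_le_lt; intro Hfar.
  assert (alpha * (w * w) <= alpha * (e * e)) by (apply Rmult_le_compat_l; lra).
  simpl in *. lra.
Qed.

Lemma bounded_below_small_decrement (u : nat -> R) (lo eps : R) :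
  0 < eps -> (forall n, lo <= u n) -> exists n, u n - u (S n) <= eps.
Proof.
  intros Heps Hlo. apply NNPP; intro Hno.
  assert (Hdrop : forall n, u n <= u 0%nat - INR n * eps).
  { induction n as [|n IH]; [simpl; lra|].
    rewrite S_INR. assert (eps < u n - u (S n)) by (apply Rnot_le_lt; intro; apply Hno; now exists n).
    lra. }
  destruct (INR_archimed eps (u 0%nat - lo) Heps) as [N HN].
  specialize (Hdrop N). specialize (Hlo N). lra.
Qed.

Lemma exp_le_compat (x y : R) : x <= y -> exp x <= exp y.
Proof. intros [Hxy|<-]; [apply Rlt_le, exp_increasing|]; lra. Qed.

Lemma exists_Rpower_opp_le (c b a : R) : 0 < c -> 0 < b -> 0 < a ->
  exists T, 1 <= T /\ c * Rpower T (- a) <= b.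
Proof.
  intros Hc Hb Ha.
  set (s := Rmax 0 (ln (c / b) / a)).
  exists (exp s); split.
  - rewrite <- exp_0. apply exp_le_compat, Rmax_l.
  - unfold Rpower. rewrite ln_exp.
    assert (Hs : ln (c / b) <= a * s).
    { apply Rmult_le_reg_r with (/ a); [apply Rinv_0_lt_compat; lra|].
      replace (a * s * / a) with s by (field; lra). apply Rmax_r. }
    assert (exp (- a * s) <= b / c).
    { replace (b / c) with (exp (- ln (c / b))).
      - apply exp_le_compat. lra.
      - rewrite exp_Ropp, exp_ln by (apply Rdiv_lt_0_compat; lra). field; lra. }
    apply Rmult_le_reg_r with (/ c); [apply Rinv_0_lt_compat; lra|].
    replace (c * exp (- a * s) * / c) with (exp (- a * s)) by (field; lra).
    unfold Rdiv in *; lra.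
Qed.

(** * Powers and the Hamiltonian *)

Lemma ppow_0 (a : R) : ppow 0 a = 0.
Proof. unfold ppow. destruct (Req_EM_T 0 0); [reflexivity|lra]. Qed.

Lemma ppow_Rpower (p a : R) : 0 < p -> ppow p a = Rpower p a.
Proof. intro Hp. unfold ppow. destruct (Req_EM_T p 0); [lra|reflexivity]. Qed.

Lemma ppow_ge0 (p a : R) : 0 <= ppow p a.
Proof. unfold ppow. destruct (Req_EM_T p 0); [lra|apply Rlt_le, exp_pos]. Qed.

Lemma ppow_le_compat (p1 p2 a : R) : 0 <= p1 <= p2 -> 0 <= a -> ppow p1 a <= ppow p2 a.
Proof.
  intros [[Hp1|<-] Hp12] Ha; [|rewrite ppow_0; apply ppow_ge0].
  rewrite !ppow_Rpower by lra. apply Rle_Rpower_l; lra.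
Qed.

Lemma ppow_scale_le (k q a : R) : 0 < k <= 1 -> 0 <= q -> a <= 1 -> k * ppow q a <= ppow (k * q) a.
Proof.
  intros Hk [Hq|<-] Ha; [|rewrite Rmult_0_r, ppow_0; lra].
  rewrite !ppow_Rpower, <- Rpower_mult_distr by nra.
  apply Rmult_le_compat_r; [apply Rlt_le, exp_pos|].
  rewrite <- (Rpower_1 k) at 1 by lra.
  unfold Rpower. apply exp_le_compat.
  assert (ln k <= 0) by (rewrite <- ln_1; apply ln_le; lra). nra.
Qed.

(* Split at [q = T]: [q^a <= T^a <= T] below, [q^(a-1) <= T^(a-1)] above. *)
Lemma ppow_le_affine (q T a : R) : 0 <= q -> 1 <= T -> 0 <= a <= 1 ->
  ppow q a <= q * Rpower T (a - 1) + T.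
Proof.
  intros [Hq|<-] HT Ha; [|rewrite ppow_0; pose proof (exp_pos ((a - 1) * ln T)); unfold Rpower; lra].
  assert (HRT : 0 < Rpower T (a - 1)) by apply exp_pos.
  rewrite ppow_Rpower by lra.
  destruct (Rle_or_lt q T) as [HqT|HTq].
  - assert (Rpower q a <= Rpower T a) by (apply Rle_Rpower_l; lra).
    assert (Rpower T a <= Rpower T 1) by (apply Rle_Rpower; lra).
    rewrite Rpower_1 in * by lra. nra.
  - replace a with (1 + (a - 1)) at 1 by ring.
    rewrite Rpower_plus, Rpower_1 by lra.
    assert (Rpower q (a - 1) <= Rpower T (a - 1)).
    { replace (a - 1) with (- (1 - a)) by ring. rewrite !Rpower_Ropp.
      apply Rinv_le_contravar; [apply exp_pos|apply Rle_Rpower_l; lra]. }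
    nra.
Qed.

Definition Ham_finite (r g x y p : R) : R :=
  (r * x + y) * p + g / (1 - g) * ppow p (1 - 1 / g).

Lemma Ham_nonneg (r g x y p : R) : 0 <= p -> Ham r g x y p = Finite (Ham_finite r g x y p).
Proof. intro Hp. unfold Ham. destruct (Rlt_dec p 0); [lra|reflexivity]. Qed.

Lemma Ham_neg (r g x y p : R) : p < 0 -> Ham r g x y p = p_infty.
Proof. intro Hp. unfold Ham. destruct (Rlt_dec p 0); [reflexivity|lra]. Qed.

(* [q] and [(1 - h) q + beta] are the slopes of the doubled function in [y] and [x].  By the
   choice of [T], the concavity defect [h g/(g-1) q^(1-1/g)] is at most
   [h ((r x1 + Y) q + g/(g-1) T)], and the first part cancels against the linear terms. *)
Lemma Ham_finite_doubling_gap (r g Y x1 xh yh e alpha beta h T : R) :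
  1 < g -> 0 < h < 1 -> 0 <= beta -> 0 <= - alpha * e -> 1 <= T ->
  g / (g - 1) * Rpower T (- / g) <= r * x1 + Y ->
  yh = (1 - h) * xh + h * x1 + e ->
  Ham_finite r g xh Y ((1 - h) * (- alpha * e) + beta) - Ham_finite r g yh Y (- alpha * e)
    <= r * alpha * e ^ 2 + h * (g / (g - 1) * T) + beta * (r * xh + Y).
Proof.
  intros Hg Hh Hbeta Hq HT HTx1 Hyh. unfold Ham_finite.
  set (q := - alpha * e) in *. set (p := (1 - h) * q + beta).
  set (th := 1 - 1 / g). set (cc := g / (g - 1)) in *.
  assert (Hcc : 0 < cc) by (apply Rdiv_lt_0_compat; lra).
  replace (g / (1 - g)) with (- cc) by (unfold cc; field; lra).
  assert (Hth : 0 <= th <= 1).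
  { assert (0 < / g) by (apply Rinv_0_lt_compat; lra).
    assert (/ g < 1) by (rewrite <- Rinv_1; apply Rinv_lt_contravar; lra).
    unfold th, Rdiv; lra. }
  assert (Hconc : (1 - h) * ppow q th <= ppow p th).
  { apply Rle_trans with (ppow ((1 - h) * q) th); [apply ppow_scale_le; lra|].
    apply ppow_le_compat; [unfold p; nra|lra]. }
  assert (Hyoung : ppow q th <= q * Rpower T (- / g) + T).
  { replace (- / g) with (th - 1) by (unfold th; field; lra). apply ppow_le_affine; lra. }
  assert (Habsorb : h * (cc * ppow q th) <= h * ((r * x1 + Y) * q + cc * T)).
  { apply Rmult_le_compat_l; [lra|].
    apply Rle_trans with (cc * (q * Rpower T (- / g) + T)); [apply Rmult_le_compat_l; lra|].
    nra. }
  assert (Hlin : (r * xh + Y) * p - (r * yh + Y) * q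
                 = r * alpha * e ^ 2 - h * (r * x1 + Y) * q + beta * (r * xh + Y))
    by (unfold p, q; rewrite Hyh; ring).
  assert (0 <= cc * ppow p th - cc * ((1 - h) * ppow q th)) by (apply Rmult_le_compat_l with (r := cc) in Hconc; lra).
  nra.
Qed.

(** * Test functions and supersolutions *)

Lemma smooth_ext (f g : R -> R) : (forall x, f x = g x) -> smooth g -> smooth f.
Proof. intros Hfg Hg. replace f with g; auto. apply functional_extensionality; auto. Qed.

Lemma smooth_quadratic (phi : R -> R) (A B C : R) :
  (forall x, phi x = A * x ^ 2 + B * x + C) -> smooth phi.
Proof.
  intro Hphi. apply (smooth_ext _ _ Hphi). clear phi Hphi.
  assert (HD : forall n, exists A' B' C',
    Derive_n (fun x => A * x ^ 2 + B * x + C) n = (fun x => A' * x ^ 2 + B' * x + C')).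
  { induction n as [|n [A' [B' [C' HE]]]]; [exists A, B, C; reflexivity|].
    exists 0, (2 * A'), B'. cbn [Derive_n]. rewrite HE.
    apply functional_extensionality; intro x.
    apply is_derive_unique. auto_derive; [exact I|ring]. }
  intros [|n] x; [exact I|cbn [ex_derive_n]].
  destruct (HD n) as [A' [B' [C' ->]]]. auto_derive. exact I.
Qed.

Lemma super_ineq_Derive_nonneg (D S : R -> Prop) (rho r g yj lamj : R) (v vb phi : R -> R) (x0 : R) :
  super_ineq D S rho r g yj lamj v vb -> smooth phi -> S x0 ->
  loc_min_on D (fun x => v x - phi x) x0 -> 0 <= Derive phi x0.
Proof.
  intros Hv Hphi Hx0 Hmin. apply Rnot_lt_le; intro Hneg.
  specialize (Hv phi x0 Hphi Hx0 Hmin). rewrite Ham_neg in Hv by exact Hneg. exact Hv.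
Qed.

Lemma super_ineq_not_loc_min_plus_slope (D S : R -> Prop) (rho r g yj lamj m z : R) (v vb : R -> R) :
  super_ineq D S rho r g yj lamj v vb -> 0 < m -> S z ->
  ~ loc_min_on D (fun x => v x + m * x) z.
Proof.
  intros Hv Hm Hz [d [Hd Hmin]].
  set (phi := fun x => - m * x).
  assert (Hphi : smooth phi) by (apply (smooth_quadratic _ 0 (- m) 0); intro; unfold phi; ring).
  assert (HD : Derive phi z = - m) by (apply is_derive_unique; unfold phi; auto_derive; [exact I|ring]).
  assert (Hmin' : loc_min_on D (fun x => v x - phi x) z).
  { exists d; split; auto. intros x Hx Hxd. specialize (Hmin x Hx Hxd). unfold phi; lra. }
  pose proof (super_ineq_Derive_nonneg _ _ _ _ _ _ _ _ _ _ _ Hv Hphi Hz Hmin'). lra.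
Qed.

(* If [v a > v c], then [- v x - m x] with [m = (v a - v c) / (2 (c - a))] is larger at [c] than
   at both ends of [[a, c + (2 M + 1) / m]], so it has an interior maximum. *)
Lemma super_ineq_nondecreasing (xl rho r g yj lamj M : R) (v vb : R -> R) :
  (forall x, xl < x -> Rabs (v x) <= M) -> lsc_on (fun x => xl < x) v ->
  super_ineq (fun x => xl < x) (fun x => xl < x) rho r g yj lamj v vb ->
  forall a c, xl < a -> a <= c -> v a <= v c.
Proof.
  intros HM Hlsc Hv a c Ha Hac. apply Rnot_lt_le; intro Hdec.
  assert (Hac' : a < c) by (destruct Hac as [Hlt|Heq]; [lra|subst; lra]).
  set (m := (v a - v c) / (2 * (c - a))).
  assert (Hm : 0 < m) by (apply Rdiv_lt_0_compat; lra).
  assert (HM0 : 0 <= M) by (pose proof (HM a Ha); pose proof (Rabs_pos (v a)); lra).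
  set (b := c + (2 * M + 1) / m).
  assert (Hmb : m * (b - c) = 2 * M + 1) by (unfold b; field; lra).
  assert (Hcb : c < b) by (assert (0 < (2 * M + 1) / m) by (apply Rdiv_lt_0_compat; lra); unfold b; lra).
  set (f := fun x => - v x - m * x).
  destruct (usc_on_attains_max f a b) as [z [Hz Hzmax]]; [lra| | |].
  - apply (usc_on_plus _ (fun x => - v x) (fun x => - (m * x))).
    + apply usc_on_opp, (lsc_on_subset (fun x => xl < x)); [intros x Hx; lra|exact Hlsc].
    + apply usc_on_continuous; intro x; reg.
  - exists (M - m * a); intros x Hx. specialize (HM x ltac:(lra)). apply Rabs_le_between in HM.
    unfold f; nra.
  - assert (Hmca : m * (c - a) = (v a - v c) / 2) by (unfold m; field; lra).
    assert (Hfac : f a < f c) by (unfold f; lra).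
    assert (Hfbc : f b < f c).
    { pose proof (HM b ltac:(lra)) as Hvb; pose proof (HM c ltac:(lra)) as Hvc.
      apply Rabs_le_between in Hvb, Hvc. unfold f. lra. }
    specialize (Hzmax c ltac:(lra)) as Hzc.
    assert (Hza : a < z) by (destruct (proj1 Hz) as [Hza| <-]; [exact Hza|lra]).
    assert (Hzb : z < b) by (destruct (proj2 Hz) as [Hzb| ->]; [exact Hzb|lra]).
    apply (super_ineq_not_loc_min_plus_slope _ _ _ _ _ _ _ m z v vb Hv Hm ltac:(simpl; lra)).
    exists (Rmin (z - a) (b - z)); split; [apply Rmin_glb_lt; lra|].
    intros x Hx Hxz. pose proof (Rmin_l (z - a) (b - z)); pose proof (Rmin_r (z - a) (b - z)).
    apply Rabs_def2 in Hxz. specialize (Hzmax x ltac:(lra)). unfold f in Hzmax. lra.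
Qed.

(* The optimal values [m n] at penalties [alpha0 * 2^n] decrease and stay above [F z0], so some
   step [m n - m (S n)] is small; that step dominates [alpha0 * 2^n * P] at the next maximiser. *)
Lemma penalized_max_small_penalty (X : Type) (D : X -> Prop) (F P : X -> R) (z0 : X) :
  D z0 -> P z0 = 0 -> (forall z, D z -> 0 <= P z) ->
  (forall alpha, 0 < alpha -> exists z, D z /\
     forall z', D z' -> F z' - alpha * P z' <= F z - alpha * P z) ->
  forall alpha0 E, 0 < alpha0 -> 0 < E ->
  exists alpha z, alpha0 <= alpha /\ D z /\
    (forall z', D z' -> F z' - alpha * P z' <= F z - alpha * P z) /\ alpha * P z <= E.
Proof.
  intros Hz0 HPz0 HP Hmax alpha0 E Ha0 HE.
  set (al := fun n => alpha0 * 2 ^ n).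
  assert (Hal : forall n, alpha0 <= al n).
  { intro n. unfold al. pose proof (pow_R1_Rle 2 n ltac:(lra)). nra. }
  destruct (functional_choice _ (fun n => Hmax (al n) ltac:(specialize (Hal n); lra)))
    as [zs Hzs].
  set (m := fun n => F (zs n) - al n * P (zs n)).
  destruct (bounded_below_small_decrement m (F z0) (E / 2)) as [n Hn]; [lra| |].
  { intro n. destruct (Hzs n) as [_ Hzn]. specialize (Hzn z0 Hz0). rewrite HPz0 in Hzn.
    unfold m; lra. }
  destruct (Hzs (S n)) as [HDn Hmaxn].
  exists (al (S n)), (zs (S n)); repeat split; auto.
  destruct (Hzs n) as [_ Hprev]. specialize (Hprev (zs (S n)) HDn).
  assert (Hdouble : al (S n) = 2 * al n) by (unfold al; simpl; ring).
  unfold m in Hn. rewrite Hdouble, Rmult_assoc in *. lra.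
Qed.

(** * Comparison *)

Section Comparison.

Variables (rho r g xl ylo M : R) (U V : bool -> R -> R) (Y Lam : bool -> R).

Hypothesis rho_pos : 0 < rho.
Hypothesis r_lt_rho : r < rho.
Hypothesis g_gt1 : 1 < g.
Hypothesis Lam_ge0 : forall b, 0 <= Lam b.
Hypothesis ylo_le_Y : forall b, ylo <= Y b.
Hypothesis ylo_pos : 0 < r * xl + ylo.
Hypothesis U_bound : forall b x, xl <= x -> Rabs (U b x) <= M.
Hypothesis V_bound : forall b x, xl <= x -> Rabs (V b x) <= M.
Hypothesis U_usc : forall b, usc_on (fun x => xl <= x) (U b).
Hypothesis V_lsc : forall b, lsc_on (fun x => xl <= x) (V b).
Hypothesis V_liminf : forall b, is_liminf_right (V b) xl (V b xl).
Hypothesis U_sub : forall b,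
  sub_ineq (fun x => xl <= x) (fun x => xl <= x) rho r g (Y b) (Lam b) (U b) (U (negb b)).
Hypothesis V_super : forall b,
  super_ineq (fun x => xl < x) (fun x => xl < x) rho r g (Y b) (Lam b) (V b) (V (negb b)).

Definition gap (beta : R) (b : bool) (x y : R) : R := U b x - V b y - beta * (x - xl).

Definition penalty (h x1 x y : R) : R := (y - (1 - h) * x - h * x1) ^ 2 / 2.

Lemma M_ge0 : 0 <= M.
Proof. pose proof (U_bound true xl (Rle_refl xl)); pose proof (Rabs_pos (U true xl)); lra. Qed.

Lemma U_sub_V_bounds (b : bool) (x y : R) : xl <= x -> xl <= y -> - (2 * M) <= U b x - V b y <= 2 * M.
Proof.
  intros Hx Hy. pose proof (U_bound b x Hx) as HU; pose proof (V_bound b y Hy) as HV.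
  apply Rabs_le_between in HU, HV. lra.
Qed.

Lemma penalty_shift_zero (h x1 x : R) : penalty h x1 x (x + h * (x1 - x)) = 0.
Proof.
  unfold penalty. replace (x + h * (x1 - x) - (1 - h) * x - h * x1) with 0 by ring. field.
Qed.

Lemma doubled_coercive (b : bool) (alpha beta h x1 : R) :
  0 < alpha -> 0 < beta -> 0 <= h <= 1 ->
  exists X Yb, xl <= X /\ (1 - h) * xl + h * x1 <= Yb /\
    forall x y, xl <= x -> xl <= y ->
      (x <= X /\ y <= Yb) \/ gap beta b x y - alpha * penalty h x1 x y < - (2 * M).
Proof.
  intros Ha Hb Hh. pose proof M_ge0 as HM0.
  set (X := xl + (4 * M + 1) / beta).
  set (D0 := 1 + (8 * M + 2) / alpha).
  assert (HbX : beta * (X - xl) = 4 * M + 1) by (unfold X; field; lra).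
  assert (HaD0 : alpha * D0 = alpha + (8 * M + 2)) by (unfold D0; field; lra).
  assert (HD0 : 1 <= D0) by (unfold D0; assert (0 < (8 * M + 2) / alpha) by (apply Rdiv_lt_0_compat; lra); lra).
  assert (HX : xl <= X) by nra.
  exists X, ((1 - h) * X + h * x1 + D0); split; [exact HX|split; [nra|]].
  intros x y Hx Hy.
  pose proof (U_sub_V_bounds b x y Hx Hy) as HUV. unfold gap, penalty.
  destruct (Rle_or_lt x X) as [HxX|HXx]; [destruct (Rle_or_lt y ((1 - h) * X + h * x1 + D0)) as [HyY|HYy]|].
  - left; auto.
  - right. set (s := y - (1 - h) * x - h * x1).
    assert (Hs : D0 < s) by (unfold s; nra).
    assert (D0 <= s ^ 2) by nra.
    assert (alpha * D0 <= alpha * s ^ 2) by (apply Rmult_le_compat_l; lra).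
    assert (0 <= beta * (x - xl)) by nra.
    lra.
  - right. pose proof (pow2_ge_0 (y - (1 - h) * x - h * x1)). nra.
Qed.

Lemma doubled_slice_attains_max (b : bool) (alpha beta h x1 : R) :
  0 < alpha -> 0 < beta -> 0 <= h <= 1 -> xl <= x1 ->
  exists xh yh, xl <= xh /\ xl <= yh /\ forall x y, xl <= x -> xl <= y ->
    gap beta b x y - alpha * penalty h x1 x y <= gap beta b xh yh - alpha * penalty h x1 xh yh.
Proof.
  intros Ha Hb Hh Hx1. pose proof M_ge0 as HM0.
  destruct (doubled_coercive b alpha beta h x1 Ha Hb Hh) as [X [Yb [HX [HYb Hcoer]]]].
  destruct (sq_affine_lipschitz (1 - h) (h * x1) xl X xl Yb) as [L HL]; [lra|].
  set (A := fun x => U b x - beta * (x - xl)).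
  set (K := fun x y => - V b y - alpha * penalty h x1 x y).
  assert (Hsplit : forall x y, gap beta b x y - alpha * penalty h x1 x y = A x + K x y)
    by (intros; unfold A, K, gap; ring).
  destruct (usc_on_box_attains_max A K xl X xl Yb (alpha / 2 * L))
    as [xh [yh [Hxh [Hyh Hmax]]]]; [lra|nra| | | | | |].
  - apply usc_on_plus; [apply (usc_on_subset (fun x => xl <= x)); [intros; lra|apply U_usc]|].
    apply usc_on_continuous; intro; reg.
  - exists M; intros x Hx. pose proof (U_bound b x (proj1 Hx)) as HU.
    apply Rabs_le_between in HU. unfold A; nra.
  - intros x Hx. apply usc_on_plus.
    + apply usc_on_opp, (lsc_on_subset (fun x => xl <= x)); [intros; lra|apply V_lsc].
    + apply usc_on_continuous; intro; unfold penalty; reg.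
  - exists M; intros x y Hx Hy. pose proof (V_bound b y (proj1 Hy)) as HV.
    apply Rabs_le_between in HV. pose proof (pow2_ge_0 (y - (1 - h) * x - h * x1)).
    unfold K, penalty; nra.
  - intros x x' y Hx Hx' Hy. specialize (HL x x' y Hx Hx' Hy). unfold K, penalty.
    apply Rmult_le_compat_l with (r := alpha / 2) in HL; lra.
  - exists xh, yh; split; [lra|split; [lra|]].
    intros x y Hx Hy. rewrite !Hsplit.
    destruct (Hcoer x y Hx Hy) as [[HxX HyY]|Hlow]; [apply Hmax; lra|].
    set (y0 := xl + h * (x1 - xl)).
    assert (Hy0 : xl <= y0) by (unfold y0; nra).
    pose proof (Hmax xl y0 ltac:(lra) ltac:(unfold y0; nra)) as Href.
    rewrite <- !Hsplit in *.
    pose proof (penalty_shift_zero h x1 xl) as Hpen0. fold y0 in Hpen0. rewrite Hpen0 in Href.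
    assert (Hgap0 : gap beta b xl y0 = U b xl - V b y0) by (unfold gap; ring).
    pose proof (U_sub_V_bounds b xl y0 (Rle_refl xl) Hy0). lra.
Qed.

Lemma doubled_attains_max (alpha beta h x1 : R) :
  0 < alpha -> 0 < beta -> 0 <= h <= 1 -> xl <= x1 ->
  exists b xh yh, xl <= xh /\ xl <= yh /\ forall b' x y, xl <= x -> xl <= y ->
    gap beta b' x y - alpha * penalty h x1 x y <= gap beta b xh yh - alpha * penalty h x1 xh yh.
Proof.
  intros Ha Hb Hh Hx1.
  destruct (doubled_slice_attains_max true alpha beta h x1) as [xt [yt [Hxt [Hyt Ht]]]]; auto.
  destruct (doubled_slice_attains_max false alpha beta h x1) as [xf [yf [Hxf [Hyf Hf]]]]; auto.
  destruct (Rle_or_lt (gap beta true xt yt - alpha * penalty h x1 xt yt)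
                      (gap beta false xf yf - alpha * penalty h x1 xf yf)).
  - exists false, xf, yf; repeat split; auto.
    intros [|] x y Hx Hy; [specialize (Ht x y Hx Hy); lra|auto].
  - exists true, xt, yt; repeat split; auto.
    intros [|] x y Hx Hy; [auto|specialize (Hf x y Hx Hy); lra].
Qed.

Lemma doubled_max_super_ineq (alpha beta h x1 : R) (b : bool) (xh yh : R) :
  xl <= xh -> xl < yh ->
  (forall y, xl <= y ->
    gap beta b xh y - alpha * penalty h x1 xh y <= gap beta b xh yh - alpha * penalty h x1 xh yh) ->
  let q := - alpha * (yh - (1 - h) * xh - h * x1) in
  0 <= q /\ Ham_finite r g yh (Y b) q + Lam b * (V (negb b) yh - V b yh) <= rho * V b yh.
Proof.
  intros Hxh Hyh Hmax q.
  set (c := (1 - h) * xh + h * x1).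
  set (phi := fun y => - alpha * ((y - c) ^ 2 / 2)).
  assert (Hphi : smooth phi)
    by (apply (smooth_quadratic _ (- alpha / 2) (alpha * c) (- alpha / 2 * c ^ 2)); intro; unfold phi; field).
  assert (HD : Derive phi yh = q)
    by (apply is_derive_unique; unfold phi, q, c; auto_derive; [exact I|field]).
  assert (Hmin : loc_min_on (fun y => xl < y) (fun y => V b y - phi y) yh).
  { exists 1; split; [lra|]. intros y Hy _.
    specialize (Hmax y (Rlt_le _ _ Hy)). unfold gap, penalty, phi, c in *. lra. }
  assert (Hq : 0 <= q) by (rewrite <- HD; exact (super_ineq_Derive_nonneg _ _ _ _ _ _ _ _ _ _ _ (V_super b) Hphi Hyh Hmin)).
  split; [exact Hq|].
  pose proof (V_super b phi yh Hphi Hyh Hmin) as Hsuper.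
  rewrite HD, Ham_nonneg in Hsuper by exact Hq. exact Hsuper.
Qed.

Lemma doubled_max_sub_ineq (alpha beta h x1 : R) (b : bool) (xh yh : R) :
  xl <= xh ->
  (forall x, xl <= x ->
    gap beta b x yh - alpha * penalty h x1 x yh <= gap beta b xh yh - alpha * penalty h x1 xh yh) ->
  let p := (1 - h) * (- alpha * (yh - (1 - h) * xh - h * x1)) + beta in
  0 <= p -> rho * U b xh <= Ham_finite r g xh (Y b) p + Lam b * (U (negb b) xh - U b xh).
Proof.
  intros Hxh Hmax p Hp.
  set (c := yh - h * x1).
  set (phi := fun x => alpha * ((c - (1 - h) * x) ^ 2 / 2) + beta * (x - xl)).
  assert (Hphi : smooth phi).
  { apply (smooth_quadratic _ (alpha / 2 * (1 - h) ^ 2) (beta - alpha * (1 - h) * c)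
      (alpha / 2 * c ^ 2 - beta * xl)); intro; unfold phi; field. }
  assert (HD : Derive phi xh = p)
    by (apply is_derive_unique; unfold phi, p, c; auto_derive; [exact I|field]).
  assert (Hmaxloc : loc_max_on (fun x => xl <= x) (fun x => U b x - phi x) xh).
  { exists 1; split; [lra|]. intros x Hx _.
    specialize (Hmax x Hx). unfold gap, penalty, phi, c in *.
    replace (yh - (1 - h) * x - h * x1) with (yh - h * x1 - (1 - h) * x) in Hmax by ring.
    replace (yh - (1 - h) * xh - h * x1) with (yh - h * x1 - (1 - h) * xh) in Hmax by ring.
    lra. }
  pose proof (U_sub b phi xh Hphi Hxh Hmaxloc) as Hsub.
  rewrite HD, Ham_nonneg in Hsub by exact Hp. exact Hsub.
Qed.

Lemma doubled_max_estimate (alpha beta h x1 T : R) (b : bool) (xh yh : R) :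
  0 < alpha -> 0 < beta -> 0 < h < 1 -> xl < x1 -> 1 <= T ->
  g / (g - 1) * Rpower T (- / g) <= r * x1 + ylo ->
  xl <= xh -> xl <= yh ->
  (forall b' x y, xl <= x -> xl <= y ->
    gap beta b' x y - alpha * penalty h x1 x y <= gap beta b xh yh - alpha * penalty h x1 xh yh) ->
  Rabs (yh - (1 - h) * xh - h * x1) < h * (x1 - xl) ->
  rho * (gap beta b xh yh - alpha * penalty h x1 xh yh)
    <= rho * (alpha * penalty h x1 xh yh) + h * (g / (g - 1) * T) + beta * (r * xl + Y b).
Proof.
  intros Ha Hb Hh Hx1 HT HTx1 Hxh Hyh Hmax He.
  set (e := yh - (1 - h) * xh - h * x1) in *.
  apply Rabs_def2 in He.
  assert (Hyh' : xl < yh) by (unfold e in He; nra).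
  destruct (doubled_max_super_ineq alpha beta h x1 b xh yh Hxh Hyh') as [Hq Hsuper];
    [intros y Hy; apply Hmax; auto|].
  pose proof (doubled_max_sub_ineq alpha beta h x1 b xh yh Hxh) as Hsub.
  cbv zeta in Hq, Hsuper, Hsub. fold e in Hq, Hsuper, Hsub.
  specialize (Hsub (fun x Hx => Hmax b x yh Hx Hyh) ltac:(nra)).
  assert (Hgap := Ham_finite_doubling_gap r g (Y b) x1 xh yh e alpha beta h T g_gt1 Hh
    (Rlt_le _ _ Hb) Hq HT ltac:(specialize (ylo_le_Y b); lra) ltac:(unfold e; ring)).
  assert (Hcoupling : Lam b * ((U (negb b) xh - V (negb b) yh) - (U b xh - V b yh)) <= 0).
  { specialize (Hmax (negb b) xh yh Hxh Hyh). unfold gap in Hmax.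
    specialize (Lam_ge0 b). nra. }
  assert (r * (alpha * e ^ 2) <= rho * (alpha * e ^ 2)) by (apply Rmult_le_compat_r; nra).
  assert (0 <= beta * ((rho - r) * (xh - xl))) by (apply Rmult_le_pos; [lra|apply Rmult_le_pos; lra]).
  unfold gap, penalty. fold e. nra.
Qed.

Lemma exists_doubled_max_small_penalty (beta h x1 E : R) :
  0 < beta -> 0 < h < 1 -> xl < x1 -> 0 < E ->
  exists alpha b xh yh, 0 < alpha /\ xl <= xh /\ xl <= yh /\
    (forall b' x y, xl <= x -> xl <= y ->
       gap beta b' x y - alpha * penalty h x1 x y <= gap beta b xh yh - alpha * penalty h x1 xh yh) /\
    alpha * penalty h x1 xh yh <= E /\ Rabs (yh - (1 - h) * xh - h * x1) < h * (x1 - xl).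
Proof.
  intros Hb Hh Hx1 HE.
  set (w := h * (x1 - xl)). assert (Hw : 0 < w) by (unfold w; nra).
  assert (Halpha0 : 0 < 2 * E / w ^ 2) by (apply Rdiv_lt_0_compat; [lra|apply pow_lt; lra]).
  destruct (penalized_max_small_penalty (bool * R * R)
    (fun '(_, x, y) => xl <= x /\ xl <= y) (fun '(b, x, y) => gap beta b x y)
    (fun '(_, x, y) => penalty h x1 x y) (true, xl, xl + h * (x1 - xl)))
    with (alpha0 := 2 * E / w ^ 2 + 1) (E := E)
    as [alpha [[[b xh] yh] [Halpha [[Hxh Hyh] [Hmax Hsmall]]]]]; [split; nra|apply penalty_shift_zero| | |lra|lra|].
  - intros [[_ x] y] _. apply Rmult_le_pos; [apply pow2_ge_0|lra].
  - intros alpha Halpha.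
    destruct (doubled_attains_max alpha beta h x1) as [bm [xm [ym [Hxm [Hym Hm]]]]]; [lra|lra|lra|lra|].
    exists (bm, xm, ym); split; [auto|]. intros [[b' x] y] [Hx Hy]. apply Hm; auto.
  - exists alpha, b, xh, yh. split; [lra|]. split; [exact Hxh|]. split; [exact Hyh|].
    split; [intros b' x y Hx Hy; exact (Hmax (b', x, y) (conj Hx Hy))|].
    split; [exact Hsmall|].
    apply (small_penalty_close E alpha); [exact Hw|lra|lra|exact Hsmall].
Qed.

Lemma doubling_estimate (h x1 T : R) (b : bool) (x : R) :
  0 < h < 1 -> xl < x1 -> 1 <= T -> g / (g - 1) * Rpower T (- / g) <= r * x1 + ylo ->
  xl <= x -> xl <= x + h * (x1 - x) ->
  rho * (U b x - V b (x + h * (x1 - x))) <= h * (g / (g - 1) * T).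
Proof.
  intros Hh Hx1 HT HTx1 Hx Hy0.
  apply Rle_plus_epsilon; intros eps Heps.
  set (C := rho * (x - xl) + Rabs (r * xl + Y true) + Rabs (r * xl + Y false)).
  destruct (exists_pos_mul_le C (eps / 2)) as [beta [Hbeta Hbeta_small]]; [lra|].
  specialize (Hbeta_small beta ltac:(lra)).
  destruct (exists_doubled_max_small_penalty beta h x1 (eps / (2 * rho)))
    as [alpha [b' [xh [yh [Ha [Hxh [Hyh [Hmax [Hsmall Hclose]]]]]]]]];
    [lra|lra|lra|apply Rdiv_lt_0_compat; lra|].
  pose proof (doubled_max_estimate alpha beta h x1 T b' xh yh Ha Hbeta Hh Hx1 HT HTx1 Hxh Hyh
    Hmax Hclose) as Hest.
  specialize (Hmax b x (x + h * (x1 - x)) Hx Hy0). rewrite penalty_shift_zero in Hmax.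
  assert (Hr : beta * (r * xl + Y b') <= beta * (Rabs (r * xl + Y true) + Rabs (r * xl + Y false))).
  { apply Rmult_le_compat_l; [lra|].
    pose proof (Rabs_pos (r * xl + Y true)); pose proof (Rabs_pos (r * xl + Y false)).
    destruct b'; [pose proof (Rle_abs (r * xl + Y true))|pose proof (Rle_abs (r * xl + Y false))]; lra. }
  assert (rho * (alpha * penalty h x1 xh yh) <= eps / 2).
  { replace (eps / 2) with (rho * (eps / (2 * rho))) by (field; lra).
    apply Rmult_le_compat_l; lra. }
  unfold gap, C in *. nra.
Qed.

Lemma exists_anchor (x : R) : xl <= x ->
  exists x1, xl < x1 /\ 0 < r * x1 + ylo /\ (xl < x -> x1 <= x).
Proof.
  intro Hx.
  destruct (exists_pos_mul_le (- r) ((r * xl + ylo) / 2)) as [d [Hd Hsmall]]; [lra|].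
  destruct Hx as [Hx| <-].
  - pose proof (Rmin_l d (x - xl)); pose proof (Rmin_r d (x - xl)).
    assert (0 < Rmin d (x - xl)) by (apply Rmin_glb_lt; lra).
    specialize (Hsmall (Rmin d (x - xl)) ltac:(lra)).
    exists (xl + Rmin d (x - xl)); repeat split; [lra|nra|intros; lra].
  - specialize (Hsmall d ltac:(lra)).
    exists (xl + d); repeat split; [lra|nra|intros; lra].
Qed.

Lemma exists_shift (b : bool) (x x1 hmax eps : R) :
  xl <= x -> xl < x1 -> (xl < x -> x1 <= x) -> 0 < hmax < 1 -> 0 < eps ->
  exists h, 0 < h <= hmax /\ xl <= x + h * (x1 - x) /\ V b (x + h * (x1 - x)) <= V b x + eps.
Proof.
  intros Hx Hx1 Hx1x Hhmax Heps. destruct Hx as [Hx| <-].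
  - specialize (Hx1x Hx). exists hmax; split; [lra|split; [nra|]].
    assert (V b (x + hmax * (x1 - x)) <= V b x); [|lra].
    apply (super_ineq_nondecreasing xl rho r g (Y b) (Lam b) M (V b) (V (negb b))); [| |apply V_super|nra|nra].
    + intros z Hz. apply V_bound. lra.
    + apply (lsc_on_subset (fun z => xl <= z)); [intros; lra|apply V_lsc].
  - destruct (proj2 (V_liminf b) eps (hmax * (x1 - xl)) Heps ltac:(nra)) as [z [Hz Hvz]].
    exists ((z - xl) / (x1 - xl)).
    replace (xl + (z - xl) / (x1 - xl) * (x1 - xl)) with z by (field; lra).
    split; [split|split; lra].
    + apply Rdiv_lt_0_compat; lra.
    + apply Rmult_le_reg_r with (x1 - xl); [lra|].
      replace ((z - xl) / (x1 - xl) * (x1 - xl)) with (z - xl) by (field; lra). lra.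
Qed.

Theorem comparison (b : bool) (x : R) : xl <= x -> U b x <= V b x.
Proof.
  intro Hx. apply Rnot_lt_le; intro Hlt. set (th := U b x - V b x).
  destruct (exists_anchor x Hx) as [x1 [Hx1 [Hx1pos Hx1x]]].
  destruct (exists_Rpower_opp_le (g / (g - 1)) (r * x1 + ylo) (/ g)) as [T [HT HTx1]];
    [apply Rdiv_lt_0_compat; lra|lra|apply Rinv_0_lt_compat; lra|].
  destruct (exists_pos_mul_le (g / (g - 1) * T) (rho * th / 4)) as [d [Hd Hdsmall]];
    [unfold th; nra|].
  pose proof (Rmin_l (1 / 2) d); pose proof (Rmin_r (1 / 2) d).
  destruct (exists_shift b x x1 (Rmin (1 / 2) d) (th / 2)) as [h [Hh [Hy0 Hvy0]]]; auto;
    [split; [apply Rmin_glb_lt|]; lra|unfold th; lra|].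
  pose proof (doubling_estimate h x1 T b x ltac:(lra) Hx1 HT HTx1 Hx Hy0) as Hest.
  specialize (Hdsmall h ltac:(lra)).
  assert (rho * (th / 2) <= rho * (U b x - V b (x + h * (x1 - x)))) by (apply Rmult_le_compat_l; unfold th in *; lra).
  unfold th in *. nra.
Qed.

End Comparison.

Theorem mainTheorem2 (rho r y1 y2 gamma xl lam1 lam2 : R) (u1 u2 v1 v2 : R -> R) :
  0 < rho -> r < rho -> 0 < y1 -> y1 < y2 -> 1 < gamma ->
  xl <= 0 -> 0 < rho * xl + y1 -> 0 < rho * xl + y2 ->
  0 <= lam1 -> 0 <= lam2 ->
  bounded_on (fun x => xl <= x) u1 -> bounded_on (fun x => xl <= x) u2 ->
  visc_sub (fun x => xl <= x) (fun x => xl <= x) rho r gamma y1 y2 lam1 lam2 u1 u2 ->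
  bounded_on (fun x => xl < x) v1 -> bounded_on (fun x => xl < x) v2 ->
  visc_super (fun x => xl < x) (fun x => xl < x) rho r gamma y1 y2 lam1 lam2 v1 v2 ->
  is_liminf_right v1 xl (v1 xl) -> is_liminf_right v2 xl (v2 xl) ->
  forall x, xl <= x -> u1 x <= v1 x /\ u2 x <= v2 x.
Proof.
  intros Hrho Hr _ Hy12 Hg Hxl Hc1 _ Hl1 Hl2 Bu1 Bu2 [Hu1 [Hu2 [Hs1 Hs2]]]
    Bv1 Bv2 [Hv1 [Hv2 [Hp1 Hp2]]] Hli1 Hli2 x Hx.
  set (U := fun b : bool => if b then u1 else u2).
  set (V := fun b : bool => if b then v1 else v2).
  destruct (bounded_on_bool (fun x => xl <= x) U) as [MU HMU]; [intros [|]; assumption|].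
  destruct (bounded_on_bool (fun x => xl <= x) V) as [MV HMV];
    [intros [|]; apply bounded_on_liminf_right_ext; assumption|].
  assert (Hcmp : forall b, U b x <= V b x).
  { intro b. apply (comparison rho r gamma xl y1 (Rmax MU MV) U V
      (fun b => if b then y1 else y2) (fun b => if b then lam1 else lam2));
      auto; try (intros [|]; assumption).
    - intros [|]; lra.
    - nra.
    - intros b' z Hz. eapply Rle_trans; [apply HMU; exact Hz|apply Rmax_l].
    - intros b' z Hz. eapply Rle_trans; [apply HMV; exact Hz|apply Rmax_r].
    - intros [|]; apply lsc_on_liminf_right_ext; assumption. }
  exact (conj (Hcmp true) (Hcmp false)).
Qed.
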